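(* Let $\mathcal{P}$ be a polyomino, $\mathbb{K}$ a field, $S=\mathbb{K}[x_v \mid v\in V(\mathcal{P})]$ standard graded, $I_{\mathcal{P}}\subset S$ the polyomino ideal and $J_{\mathcal{P}}\subset S$ the toric ideal of $\mathcal{P}$ (both defined in the context). Then $I_{\mathcal{P}}=(J_{\mathcal{P}})_2$, i.e. $I_{\mathcal{P}}$ is the ideal generated by the homogeneous component of degree $2$ of $J_{\mathcal{P}}$; equivalently, the minimal generators of $I_{\mathcal{P}}$ are exactly the minimal generators of degree $2$ of $J_{\mathcal{P}}$.
   Context: For $a\in\mathbb{N}^2$ the cell $[a,a+(1,1)]$ has vertices $a,a+(1,0),a+(0,1),a+(1,1)$ and the four obvious edges. A polyomino $\mathcal{P}$ is a finite nonempty set of cells such that any two cells $C,D\in\mathcal{P}$ are joined by a sequence $C=C_1,\dots,C_m=D$ of cells of $\mathcal{P}$ with $C_i\cap C_{i+1}$ an edge of $C_i$. $V(\mathcal{P})$ is the union of the vertex sets of its cells. For $a=(i,j)$, $b=(k,\ell)$ with $i<k$, $j<\ell$, the interval $[a,b]=\{(p,q)\in\mathbb{N}^2: i\le p\le k,\ j\le q\le \ell\}$ is a proper interval; $a,b$ are its diagonal corners and $c=(i,\ell)$, $d=(k,j)$ its anti-diagonal corners. It is an inner interval of $\mathcal{P}$ if all cells contained in $[a,b]$ belong to $\mathcal{P}$. The polyomino ideal $I_{\mathcal{P}}$ is generated by all inner 2-minors $x_ax_b-x_cx_d$, $[a,b]$ an inner interval of $\mathcal{P}$ with anti-diagonal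 corners $c,d$. Toric ideal: a hole of $\mathcal{P}$ is a finite nonempty set $\mathcal{H}$ of cells of $\mathbb{N}^2$ not in $\mathcal{P}$, any two of which are connected by a path of cells in $\mathcal{H}$ (consecutive cells sharing an edge), and maximal with these properties. Order $\mathbb{N}^2$ by $(a_1,a_2)<(b_1,b_2)$ iff $a_1<b_1$, or $a_1=b_1$ and $a_2<b_2$; the lower left corner of a hole is the minimum of its vertices. Let $\mathcal{H}_1,\dots,\mathcal{H}_r$ be the holes of $\mathcal{P}$ with lower left corners $e_k=(i_k,j_k)$, and $\mathcal{F}_k=\{(i,j)\in V(\mathcal{P}): i\le i_k,\ j\le j_k\}$. A horizontal edge interval of $\mathcal{P}$ is a set $\{(t,j): i\le t\le k\}$ such that $\{(t,j),(t+1,j)\}$ is an edge of a cell of $\mathcal{P}$ for $t=i,\dots,k-1$; it is maximal if not strictly contained in another one; vertical edge intervals are defined analogously. Each vertex $a\in V(\mathcal{P})$ lies in a unique maximal horizontal edge interval $H(a)$ and a unique maximal vertical edge interval $V(a)$. Take variables $h_H$ for each maximal horizontal edge interval $H$, $v_V$ for each maximal vertical edge interval $V$, and $w_1,\dots,w_r$, and define $\varphi:S\to\mathbb{K}[h_H,v_V,w_k]$ by $\varphi(x_a)=h_{H(a)}v_{V(a)}\prod_{k:\,a\in\mathcal{F}_k}w_k$. The toric ideal is $J_{\mathcal{P}}=\ker\varphi$. *)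

From HB Require Import structures.
From mathcomp Require Import all_boot all_order all_algebra.
From mathcomp Require Import mpoly.
Set Implicit Arguments.
Unset Strict Implicit.
Unset Printing Implicit Defensive.
Import GRing.Theory.
Local Open Scope ring_scope.

(* A cell [a, a+(1,1)] is represented by its lower left corner a. *)
Definition cell := (nat * nat)%type.

Definition cell_vertices (c : cell) : seq (nat * nat) :=
  [:: c; (c.1.+1, c.2); (c.1, c.2.+1); (c.1.+1, c.2.+1)].

Definition verts (C : seq cell) : seq (nat * nat) :=
  flatten (map cell_vertices C).

Definition adjcell (c d : cell) : bool :=
  ((c.1 == d.1) && ((c.2.+1 == d.2) || (d.2.+1 == c.2))) ||
  ((c.2 == d.2) && ((c.1.+1 == d.1) || (d.1.+1 == c.1))).

Definition cells_connected (C : seq cell) : Prop :=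
  forall c d, c \in C -> d \in C ->
    exists p : seq cell, [/\ path adjcell c p, last c p = d & all (mem C) p].

Definition is_polyomino (P : seq cell) : Prop :=
  P != [::] /\ cells_connected P.

(* V(P), enumerated without repetition; the variable x_i of S corresponds to
   the vertex nth (0,0) (VP P) i. *)
Definition VP (P : seq cell) : seq (nat * nat) := undup (verts P).
Definition vtx (P : seq cell) (i : nat) : nat * nat := nth (0%N, 0%N) (VP P) i.

Definition Sring (K : fieldType) (P : seq cell) := {mpoly K[size (VP P)]}.

Definition inner_interval (P : seq cell) (a b : nat * nat) : Prop :=
  (a.1 < b.1)%N /\ (a.2 < b.2)%N /\
  forall c : cell, (a.1 <= c.1 < b.1)%N -> (a.2 <= c.2 < b.2)%N -> c \in P.

Definition inner_minor (K : fieldType) (P : seq cell) (f : Sring K P) : Prop :=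
  exists i j k l : 'I_(size (VP P)),
    [/\ inner_interval P (vtx P i) (vtx P j),
        vtx P k = ((vtx P i).1, (vtx P j).2),
        vtx P l = ((vtx P j).1, (vtx P i).2) &
        f = 'X_i * 'X_j - 'X_k * 'X_l].

Definition ideal_gen (n : nat) (K : fieldType) (G : {mpoly K[n]} -> Prop)
  (f : {mpoly K[n]}) : Prop :=
  exists (m : nat) (c g : 'I_m -> {mpoly K[n]}),
    (forall t, G (g t)) /\ f = \sum_(t < m) c t * g t.

Definition polyomino_ideal (K : fieldType) (P : seq cell) : Sring K P -> Prop :=
  ideal_gen (@inner_minor K P).

Definition is_hole (P : seq cell) (H : seq cell) : Prop :=
  [/\ H != [::], (forall c, c \in H -> c \notin P), cells_connected H &
      forall H' : seq cell, (forall c, c \in H' -> c \notin P) ->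
        cells_connected H' -> {subset H <= H'} -> {subset H' <= H}].

Definition holes_enum (P : seq cell) (hs : seq (seq cell)) : Prop :=
  [/\ (forall H, H \in hs -> is_hole P H),
      (forall H, is_hole P H -> exists2 H', H' \in hs & H =i H') &
      (forall i j, (i < size hs)%N -> (j < size hs)%N ->
         nth [::] hs i =i nth [::] hs j -> i = j)].

Definition lexle (a b : nat * nat) : bool :=
  (a.1 < b.1)%N || ((a.1 == b.1) && (a.2 <= b.2)%N).
Definition lexmin (a b : nat * nat) := if lexle a b then a else b.
Definition lower_left (H : seq cell) : nat * nat :=
  let vs := verts H in foldr lexmin (head (0%N, 0%N) vs) vs.

Definition inF (H : seq cell) (a : nat * nat) : bool :=
  ((a.1 <= (lower_left H).1) && (a.2 <= (lower_left H).2))%N.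

(* {(t,j),(t+1,j)} is an edge of a cell of P *)
Definition hedge (P : seq cell) (t j : nat) : bool :=
  ((t, j) \in P) || ((0 < j)%N && ((t, j.-1) \in P)).
(* {(i,t),(i,t+1)} is an edge of a cell of P *)
Definition vedge (P : seq cell) (i t : nat) : bool :=
  ((i, t) \in P) || ((0 < i)%N && ((i.-1, t) \in P)).

(* Left endpoint of the maximal horizontal edge interval H(a) containing a;
   a maximal horizontal edge interval is determined by its left endpoint. *)
Fixpoint hleft_x (P : seq cell) (j i : nat) : nat :=
  if i is i'.+1 then (if hedge P i' j then hleft_x P j i' else i) else 0%N.
Definition hleft (P : seq cell) (a : nat * nat) : nat * nat :=
  (hleft_x P a.2 a.1, a.2).
(* Bottom endpoint of the maximal vertical edge interval V(a). *)
Fixpoint vbot_y (P : seq cell) (i t : nat) : nat :=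
  if t is t'.+1 then (if vedge P i t' then vbot_y P i t' else t) else 0%N.
Definition vbot (P : seq cell) (a : nat * nat) : nat * nat :=
  (a.1, vbot_y P a.1 a.2).

Definition HI (P : seq cell) := undup (map (hleft P) (VP P)).
Definition VI (P : seq cell) := undup (map (vbot P) (VP P)).

(* Number of variables of the target ring K[h_H, v_V, w_k]:
   variables 0 .. |HI|-1 are the h_H, then the v_V, then w_1..w_r. *)
Definition ntor (P : seq cell) (hs : seq (seq cell)) : nat :=
  (size (HI P) + size (VI P) + size hs)%N.

Definition phi_exp (P : seq cell) (hs : seq (seq cell)) (a : nat * nat)
  (j : nat) : nat :=
  if (j < size (HI P))%N then nat_of_bool (nth (0%N, 0%N) (HI P) j == hleft P a)
  else if (j < size (HI P) + size (VI P))%N then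
    nat_of_bool (nth (0%N, 0%N) (VI P) (j - size (HI P)) == vbot P a)
  else nat_of_bool (inF (nth [::] hs (j - size (HI P) - size (VI P))) a).

(* phi(x_a) = h_{H(a)} v_{V(a)} prod_{k : a in F_k} w_k *)
Definition phi_var (K : fieldType) (P : seq cell) (hs : seq (seq cell))
  (i : 'I_(size (VP P))) : {mpoly K[ntor P hs]} :=
  'X_[ [multinom phi_exp P hs (vtx P i) j | j < ntor P hs] ].

Definition phi (K : fieldType) (P : seq cell) (hs : seq (seq cell))
  (f : Sring K P) : {mpoly K[ntor P hs]} :=
  mmap (fun c : K => c%:MP) (@phi_var K P hs) f.

Definition toric_ideal (K : fieldType) (P : seq cell) (hs : seq (seq cell))
  (f : Sring K P) : Prop := phi hs f = 0.

Definition toric_deg2 (K : fieldType) (P : seq cell) (hs : seq (seq cell))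
  (f : Sring K P) : Prop := toric_ideal hs f /\ f \is 2.-homog.

(* Both ideals are generated by binomials x_a x_b - x_c x_d: I_P by definition, and (J_P)_2
   because the kernel of a monomial map is spanned by the binomials it kills.  Such a binomial
   is killed by phi iff {H(a), H(b)} = {H(c), H(d)}, {V(a), V(b)} = {V(c), V(d)} and
   [a in F_k] + [b in F_k] = [c in F_k] + [d in F_k] for every hole.  Apart from the trivial
   case {a, b} = {c, d}, this says that a and b are opposite corners of a rectangle whose four
   sides lie on maximal edge intervals of P, with balanced hole counts: a "frame".  The
   rectangle of a frame contains no cell outside P, for such a cell would lie in a hole
   confined to the rectangle, whose lower left corner then unbalances the count.  So frames
   are exactly the inner intervals, and the binomials of (J_P)_2 are the inner 2-minors up to
   sign. *)

From HB Require Import structures.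
From mathcomp Require Import all_boot all_order all_algebra.
From mathcomp Require Import mpoly.
From mathcomp Require Import zify.
From Stdlib Require Import ClassicalEpsilon.
Set Implicit Arguments.
Unset Strict Implicit.
Unset Printing Implicit Defensive.
Import GRing.Theory.

Section IdealGen.
Variables (n : nat) (K : fieldType).
Local Open Scope ring_scope.
Implicit Types (G : {mpoly K[n]} -> Prop) (f g : {mpoly K[n]}).

Lemma ideal_gen_seqP G f :
  ideal_gen G f <->
  exists s : seq ({mpoly K[n]} * {mpoly K[n]}),
    (forall x, x \in s -> G x.2) /\ f = \sum_(x <- s) x.1 * x.2.
Proof.
split=> [[m [c [g [Gg ->]]]] | [s [Gs ->]]].
  exists [seq (c t, g t) | t <- enum 'I_m]; split; last by rewrite big_map big_enum.
  by move=> x /mapP[t _ ->]; apply: Gg.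
exists (size s), (fun t => (nth 0 s t).1), (fun t => (nth 0 s t).2); split.
  by move=> t; apply/Gs/mem_nth.
by rewrite (big_nth 0) big_mkord.
Qed.

Lemma ideal_gen0 G : ideal_gen G 0.
Proof. by apply/ideal_gen_seqP; exists [::]; rewrite big_nil. Qed.

Lemma ideal_gen_mem G g : G g -> ideal_gen G g.
Proof.
move=> Gg; apply/ideal_gen_seqP; exists [:: (1, g)].
by rewrite big_seq1 mul1r; split=> // x; rewrite inE => /eqP->.
Qed.

Lemma ideal_genD G f g : ideal_gen G f -> ideal_gen G g -> ideal_gen G (f + g).
Proof.
move=> /ideal_gen_seqP[s [Gs ->]] /ideal_gen_seqP[t [Gt ->]].
apply/ideal_gen_seqP; exists (s ++ t); rewrite big_cat; split=> // x.
by rewrite mem_cat => /orP[/Gs | /Gt].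
Qed.

Lemma ideal_genMl G a f : ideal_gen G f -> ideal_gen G (a * f).
Proof.
move=> /ideal_gen_seqP[s [Gs ->]]; apply/ideal_gen_seqP.
exists [seq (a * x.1, x.2) | x <- s]; split; first by move=> _ /mapP[x /Gs Gx ->].
by rewrite big_map mulr_sumr; apply: eq_bigr => x _; rewrite mulrA.
Qed.

Lemma ideal_genN G f : ideal_gen G f -> ideal_gen G (- f).
Proof. by rewrite -mulN1r; apply: ideal_genMl. Qed.

Lemma ideal_gen_sum G (I : Type) (r : seq I) (P : pred I) (F : I -> {mpoly K[n]}) :
  (forall i, P i -> ideal_gen G (F i)) -> ideal_gen G (\sum_(i <- r | P i) F i).
Proof. by move=> GF; apply: big_ind => //; [apply: ideal_gen0 | apply: ideal_genD]. Qed.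

Lemma ideal_gen_sub G G' f :
  (forall g, G g -> ideal_gen G' g) -> ideal_gen G f -> ideal_gen G' f.
Proof.
move=> GG' [m [c [g [Gg ->]]]].
by apply: ideal_gen_sum => t _; apply/ideal_genMl/GG'.
Qed.

End IdealGen.

Section MonomialMapKernel.
Variables (K : fieldType) (n N : nat) (e : 'I_n -> 'X_{1..N}).
Local Open Scope ring_scope.

Definition monomial_image (m : 'X_{1..n}) : 'X_{1..N} := (\sum_i e i *+ m i)%MM.

Local Notation phi0 := (mmap (fun c : K => c%:MP) (fun i => 'X_[e i])).

Lemma mmap1_monomial m :
  mmap1 (fun i => 'X_[e i] : {mpoly K[N]}) m = 'X_[monomial_image m].
Proof. exact: mprodXnE. Qed.

Lemma mcoeff_mmap_monomial (f : {mpoly K[n]}) t :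
  (phi0 f)@_t = \sum_(m <- msupp f | monomial_image m == t) f@_m.
Proof.
rewrite /mmap (raddf_sum (mcoeff t)) [RHS]big_mkcond /=; apply: eq_bigr => m _.
by rewrite mmap1_monomial mcoeffCM mcoeffX; case: eqP; rewrite ?mulr1 ?mulr0.
Qed.

Lemma monomial_imageD m1 m2 :
  monomial_image (m1 + m2) = (monomial_image m1 + monomial_image m2)%MM.
Proof.
rewrite /monomial_image -big_split /=; apply: eq_bigr => i _.
by apply/mnmP => t; rewrite !(mnmDE, mulmnE) mulnDr.
Qed.

Lemma monomial_imageU i : monomial_image U_(i) = e i.
Proof.
apply/mnmP => t; rewrite mnm_sumE (bigD1 i) //= mulmnE mnm1E eqxx muln1.
by rewrite big1 ?addn0 // => j ne_ji; rewrite mulmnE mnm1E eq_sym (negbTE ne_ji) muln0.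
Qed.

Lemma mmap_monomialX m : phi0 'X_[m] = 'X_[monomial_image m].
Proof. by rewrite mmapX mmap1_monomial. Qed.

Variables (G : {mpoly K[n]} -> Prop) (D : 'X_{1..n} -> Prop).
Hypothesis binomial_mem : forall m m', D m -> D m' ->
  monomial_image m = monomial_image m' -> ideal_gen G ('X_[m] - 'X_[m']).

Lemma monomial_map_kernel (f : {mpoly K[n]}) :
  {in msupp f, forall m, D m} -> phi0 f = 0 -> ideal_gen G f.
Proof.
move=> Df phif0; set s := msupp f.
(* [r m] is the first monomial of [f] in the fibre of [m]; as the coefficients of [f] sum to
   zero on each fibre, [f] is a combination of the binomials [X^m - X^(r m)]. *)
pose r m := nth 0%MM s (find (fun m' => monomial_image m' == monomial_image m) s).
have r_fibre m : m \in s -> r m \in s /\ monomial_image (r m) = monomial_image m.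
  move=> ms; have hasm : has (fun m' => monomial_image m' == monomial_image m) s.
    by apply/hasP; exists m.
  by split; [apply/mem_nth; rewrite -has_find | apply/eqP/(nth_find 0%MM hasm)].
have -> : f = \sum_(m <- s) f@_m *: ('X_[m] - 'X_[r m]) + \sum_(m <- s) f@_m *: 'X_[r m].
  by rewrite -big_split /= {1}[f]mpolyE; apply: eq_bigr => m _; rewrite -scalerDr subrK.
have -> : \sum_(m <- s) f@_m *: 'X_[r m] = 0.
  apply/mpolyP => u; rewrite mcoeff0 raddf_sum /=.
  under eq_bigr do rewrite mcoeffZ mcoeffX.
  have [/hasP[m0 m0s /eqP <-] | /hasPn no_u] := boolP (has (fun m => r m == u) s); last first.
    by rewrite big1_seq // => m /andP[_ /no_u /negbTE ->]; rewrite mulr0.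
  transitivity (phi0 f)@_(monomial_image m0); last by rewrite phif0 mcoeff0.
  rewrite mcoeff_mmap_monomial [RHS]big_mkcond /= !big_seq; apply: eq_bigr => m ms.
  suff -> : (r m == r m0) = (monomial_image m == monomial_image m0).
    by case: eqP; rewrite ?mulr1 ?mulr0.
  apply/eqP/eqP => [rm | Em]; last by rewrite /r Em.
  by rewrite -(r_fibre m ms).2 rm (r_fibre m0 m0s).2.
rewrite addr0 big_seq; apply: ideal_gen_sum => m ms; rewrite -mul_mpolyC.
have [rm_s rm_fibre] := r_fibre m ms.
by apply/ideal_genMl/binomial_mem; rewrite ?rm_fibre //; apply: Df.
Qed.

End MonomialMapKernel.

Lemma mdeg_eq2 n (m : 'X_{1..n}) : mdeg m = 2 -> exists i j, m = (U_(i) + U_(j))%MM.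
Proof.
move=> deg_m; have /existsP[i m_i] : [exists i, m i != 0].
  rewrite -negb_forall; apply/negP => /forallP m0.
  by move: deg_m; rewrite mdegE big1 // => i _; apply/eqP.
have le_Um : (U_(i) <= m)%MM by apply/mnm_lepP => j; rewrite mnm1E; case: eqP => // <-; lia.
have /mdeg1P[j /eqP mUj] : mdeg (m - U_(i))%MM == 1.
  by move: deg_m; rewrite -{1}(submK le_Um) mdegD mdeg1; lia.
by exists j, i; rewrite -mUj submK.
Qed.

Lemma perm_eq_pair (T : eqType) (a b c d : T) :
  perm_eq [:: a; b] [:: c; d] -> (a = c /\ b = d) \/ (a = d /\ b = c).
Proof.
move=> pe; have := perm_mem pe c; rewrite !inE eqxx /= => /orP[] /eqP ec; subst c.
  by move: pe; rewrite perm_cons => /(@perm_small_eq _ _ [:: d] isT)[->]; left.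
move: pe; rewrite (perm_catC [:: a] [:: b]) /=.
by rewrite perm_cons => /(@perm_small_eq _ _ [:: d] isT)[->]; right.
Qed.

Lemma lexle_refl : reflexive lexle.
Proof. by move=> a; rewrite /lexle eqxx leqnn orbT. Qed.

Lemma lexle_trans : transitive lexle.
Proof. by move=> [b1 b2] [a1 a2] [c1 c2]; rewrite /lexle /=; lia. Qed.

Lemma lexle_total a b : lexle a b || lexle b a.
Proof. by case: a b => [a1 a2] [b1 b2]; rewrite /lexle /=; lia. Qed.

Lemma lexle_anti a b : lexle a b -> lexle b a -> a = b.
Proof. by case: a b => [a1 a2] [b1 b2]; rewrite /lexle /= => h1 h2; congr pair; lia. Qed.

Lemma foldr_lexmin_min x0 s :
  foldr lexmin x0 s \in x0 :: s /\ {in x0 :: s, forall v, lexle (foldr lexmin x0 s) v}.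
Proof.
elim: s => [|y t [IHmem IHmin]] /=.
  by split=> [|v]; rewrite inE // => /eqP->; apply: lexle_refl.
set m := foldr lexmin x0 t in IHmem IHmin *.
have in_y v : v \in [:: x0, y & t] = (v == y) || (v \in x0 :: t) by rewrite !inE orbCA.
rewrite /lexmin; case: ifP => [le_y | /negbT lt_y]; split.
- by rewrite in_y eqxx.
- move=> v; rewrite in_y => /orP[/eqP-> | /IHmin]; [exact: lexle_refl | exact: lexle_trans].
- by rewrite in_y IHmem orbT.
- have le_m : lexle m y by move: (lexle_total y m); rewrite (negbTE lt_y).
  by move=> v; rewrite in_y => /orP[/eqP-> | /IHmin].
Qed.

Lemma cell_vertices_lexle c v : v \in cell_vertices c -> lexle c v.
Proof. by case: c => c1 c2; rewrite !inE => /or4P[] /eqP->; rewrite /lexle /=; lia. Qed.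

Lemma lower_left_mem H : H != [::] -> lower_left H \in H.
Proof.
case: H => [|c0 H] // _; rewrite /lower_left; set vs := verts _.
have c0_vs : c0 \in vs by rewrite mem_head.
have [] := foldr_lexmin_min c0 vs; set m := foldr _ _ _ => m_in m_min.
have /flatten_mapP[c cH m_c] : m \in vs by move: m_in; rewrite inE => /orP[/eqP-> | ].
suff -> : m = c by [].
apply: lexle_anti (cell_vertices_lexle m_c); apply: m_min; rewrite inE; apply/orP; right.
by apply/flatten_mapP; exists c => //; rewrite mem_head.
Qed.

Lemma adjcellC : ssrbool.symmetric adjcell.
Proof. by move=> [c1 c2] [d1 d2]; rewrite /adjcell /=; lia. Qed.

Lemma cells_connected_from (C : seq cell) c0 :
  (forall d, d \in C -> exists p, [/\ path adjcell c0 p, last c0 p = d & all (mem C) p]) ->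
  c0 \in C -> cells_connected C.
Proof.
move=> from_c0 c0C c d /from_c0[p [c0p <- pC]] /from_c0[q [c0q <- qC]].
have rev_p : path adjcell (last c0 p) (rev (belast c0 p)).
  by rewrite rev_path; apply: sub_path c0p => x y; rewrite adjcellC.
have last_rev : last (last c0 p) (rev (belast c0 p)) = c0.
  by case/lastP: p {c0p pC rev_p} => // p x; rewrite belast_rcons last_rcons rev_cons last_rcons.
exists (rev (belast c0 p) ++ q); split.
- by rewrite cat_path rev_p last_rev c0q.
- by rewrite last_cat last_rev.
- rewrite all_cat qC andbT all_rev; apply/allP => x /mem_belast.
  by rewrite inE => /orP[/eqP-> | /(allP pC)].
Qed.

Fixpoint seg_start (e : pred nat) (i : nat) : nat :=
  if i is i'.+1 then (if e i' then seg_start e i' else i) else 0.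

Lemma seg_start_le e i : seg_start e i <= i.
Proof. by elim: i => //= i IH; case: ifP => // _; apply: leqW. Qed.

Lemma seg_start_gt e i t : t < i -> ~~ e t -> t < seg_start e i.
Proof.
elim: i => // i IH; rewrite ltnS leq_eqVlt => /orP[/eqP-> /negbTE /= -> // | lt_ti] nt /=.
by case: ifP => _; [apply: IH | apply: ltnW].
Qed.

Lemma seg_start_eq e a b : a <= b ->
  seg_start e a = seg_start e b <-> (forall t, a <= t < b -> e t).
Proof.
move=> le_ab; split=> [eq_ab t /andP[le_at lt_tb] | e_ab].
  apply/negPn/negP => /(seg_start_gt lt_tb); rewrite -eq_ab.
  by move: (seg_start_le e a); lia.
elim: b le_ab e_ab => [|b IH]; first by rewrite leqn0 => /eqP->.
rewrite leq_eqVlt => /orP[/eqP-> // | lt_ab] e_ab /=.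
by rewrite e_ab ?IH // => [t /andP[a_t t_b]|]; [apply: e_ab; lia | lia].
Qed.

Lemma hleft_eq P x y x' y' : x <= x' ->
  hleft P (x, y) = hleft P (x', y') <-> y = y' /\ (forall t, x <= t < x' -> hedge P t y).
Proof.
have hleft_xE j : hleft_x P j =1 seg_start (hedge P ^~ j) by move=> i; elim: i => //= i ->.
move=> le_x; rewrite /hleft /= !hleft_xE.
split=> [[eq_x eq_y] | [<- /(seg_start_eq _ le_x) ->]] //.
by move: eq_x; rewrite eq_y (seg_start_eq _ le_x).
Qed.

Lemma vbot_eq P x y x' y' : y <= y' ->
  vbot P (x, y) = vbot P (x', y') <-> x = x' /\ (forall t, y <= t < y' -> vedge P x t).
Proof.
have vbot_yE i : vbot_y P i =1 seg_start (vedge P i) by move=> t; elim: t => //= t ->.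
move=> le_y; rewrite /vbot /= !vbot_yE.
split=> [[eq_x eq_y] | [<- /(seg_start_eq _ le_y) ->]] //.
by move: eq_y; rewrite eq_x (seg_start_eq _ le_y).
Qed.

Section HoleInRectangle.
Variables (P : seq cell) (x0 y0 x1 y1 : nat).
Hypothesis bottom_side : forall t, x0 <= t < x1 -> hedge P t y0.
Hypothesis top_side : forall t, x0 <= t < x1 -> hedge P t y1.
Hypothesis left_side : forall t, y0 <= t < y1 -> vedge P x0 t.
Hypothesis right_side : forall t, y0 <= t < y1 -> vedge P x1 t.

Definition in_rect (c : cell) : bool := (x0 <= c.1 < x1) && (y0 <= c.2 < y1).

Lemma adjcell_in_rect c d :
  in_rect c -> c \notin P -> d \notin P -> adjcell c d -> in_rect d.
Proof.
case: c d => [c1 c2] [d1 d2]; rewrite /in_rect /adjcell /= => c_in cP dP.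
case/orP => /andP[/eqP e1 /orP[] /eqP e2].
- subst d1 d2; case: (ltnP c2.+1 y1) => [|le_y1]; first lia.
  have := @top_side c1; rewrite (_ : y1 = c2.+1); last lia.
  by rewrite /hedge /= (negbTE cP) (negbTE dP); lia.
- subst d1 c2; case: (leqP y0 d2) => [|lt_d2]; first lia.
  have := @bottom_side c1; rewrite (_ : y0 = d2.+1); last lia.
  by rewrite /hedge /= (negbTE cP) (negbTE dP); lia.
- subst d2 d1; case: (ltnP c1.+1 x1) => [|le_x1]; first lia.
  have := @right_side c2; rewrite (_ : x1 = c1.+1); last lia.
  by rewrite /vedge /= (negbTE cP) (negbTE dP); lia.
- subst d2 c1; case: (leqP x0 d1) => [|lt_d1]; first lia.
  have := @left_side c2; rewrite (_ : x0 = d1.+1); last lia.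
  by rewrite /vedge /= (negbTE cP) (negbTE dP); lia.
Qed.

Lemma path_in_rect c p :
  in_rect c -> c \notin P -> path adjcell c p -> all [predC P] p -> all in_rect p.
Proof.
elim: p c => //= d p IH c c_in cP /andP[cd dp] /andP[dP pP].
have d_in := adjcell_in_rect c_in cP dP cd.
by rewrite d_in (IH d).
Qed.

Lemma hole_in_rect c0 :
  in_rect c0 -> c0 \notin P -> exists2 H, is_hole P H & {subset H <= in_rect}.
Proof.
move=> c0_in c0_P.
pose reach d := exists p, [/\ path adjcell c0 p, last c0 p = d & all [predC P] p].
pose rect_cells := [seq (a, b) | a <- iota x0 (x1 - x0), b <- iota y0 (y1 - y0)].
pose H := [seq d <- rect_cells | if excluded_middle_informative (reach d) then true else false].
have reach_in d : reach d -> in_rect d && (d \notin P).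
  case=> p [c0p <- pP]; have := mem_last c0 p; rewrite inE => /orP[/eqP-> | dp].
    by rewrite c0_in c0_P.
  by rewrite (allP (path_in_rect c0_in c0_P c0p pP)) //; apply: (allP pP).
have memH d : d \in H <-> reach d.
  rewrite mem_filter; case: excluded_middle_informative => [rd | nrd] //=.
  split=> // _; case/andP: (reach_in d rd); case: d {rd} => a b.
  by rewrite /in_rect /= => /andP[ab_x ab_y] _; apply: allpairs_f; rewrite mem_iota; lia.
have reach_path p : path adjcell c0 p -> all [predC P] p -> all (mem H) p.
  move=> c0p pP; apply/allP => d dp; apply/memH.
  move: c0p pP; case/splitPr: dp => p1 p2.
  rewrite cat_path all_cat /= => /andP[c0p1 /andP[p1d _]] /andP[p1P /andP[dP _]].
  by exists (rcons p1 d); rewrite rcons_path c0p1 p1d last_rcons all_rcons /= dP p1P.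
have c0_H : c0 \in H by apply/memH; exists [::].
exists H; last by move=> d /memH /reach_in /andP[].
split.
- by apply/eqP => H0; rewrite H0 in c0_H.
- by move=> d /memH /reach_in /andP[].
- apply: (cells_connected_from _ c0_H) => d /memH[p [c0p <- pP]].
  by exists p; split=> //; apply: reach_path.
- move=> H' H'_P H'_conn sub_H d dH'.
  have [p [c0p <- pH']] := H'_conn c0 d (sub_H _ c0_H) dH'.
  by apply/memH; exists p; split=> //; apply/allP => x /(allP pH') /H'_P.
Qed.

End HoleInRectangle.

Section Frame.
Variables (P : seq cell) (hs : seq (seq cell)).

Definition frame (a b c d : nat * nat) : Prop :=
  [/\ hleft P a = hleft P c, hleft P b = hleft P d,
      vbot P a = vbot P d, vbot P b = vbot P c &
      forall H, H \in hs -> inF H a + inF H b = inF H c + inF H d].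

Lemma frameC a b c d : frame a b c d -> frame b a d c.
Proof. by case=> ? ? ? ? bal; split=> // H /bal; rewrite addnC => ->; rewrite addnC. Qed.

Lemma frame_sym a b c d : frame a b c d -> frame c d a b.
Proof. by case=> ? ? ? ? bal; split=> // H /bal ->. Qed.

Lemma frame_corners a b c d : frame a b c d -> c = (b.1, a.2) /\ d = (a.1, b.2).
Proof.
by case: a b c d => [? ?] [? ?] [? ?] [? ?] [] [_ <-] [_ <-] [-> _] [-> _].
Qed.

Hypothesis hs_holes : holes_enum P hs.

Lemma hole_lower_left H : H \in hs -> lower_left H \in H /\ lower_left H \notin P.
Proof.
case: hs_holes => holes _ _ /holes[H_ne H_P _ _].
by have H_ll := lower_left_mem H_ne; rewrite H_ll H_P.
Qed.

Lemma frame_inner a b c d : frame a b c d -> a.1 < b.1 -> a.2 < b.2 -> inner_interval P a b.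
Proof.
move=> fr; have [ec ed] := frame_corners fr; subst c d; case: fr.
case: a b => [a1 a2] [b1 b2] /= + + + + bal lt1 lt2.
move=> /(hleft_eq _ _ _ (ltnW lt1))[_ bottom] /esym /(hleft_eq _ _ _ (ltnW lt1))[_ top].
move=> /(vbot_eq _ _ _ (ltnW lt2))[_ left] /esym /(vbot_eq _ _ _ (ltnW lt2))[_ right].
split=> //; split=> // [[c1 c2]] /= c1_in c2_in; apply/negPn/negP => cP.
have c_in : in_rect a1 a2 b1 b2 (c1, c2) by rewrite /in_rect /= c1_in.
have [H H_hole H_rect] := hole_in_rect bottom top left right c_in cP.
have [_ all_holes _] := hs_holes; have [H' H'_hs eqH] := all_holes H H_hole.
have /H_rect : lower_left H' \in H by rewrite eqH; case: (hole_lower_left H'_hs).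
move: (bal H' H'_hs); rewrite unfold_in /in_rect /inF /=.
by case: (lower_left H') => e1 e2 /=; lia.
Qed.

Lemma inner_frame a b : inner_interval P a b -> frame a b (b.1, a.2) (a.1, b.2).
Proof.
case: a b => [a1 a2] [b1 b2] [/= lt1 [lt2 inP]].
have in_P x y : a1 <= x < b1 -> a2 <= y < b2 -> (x, y) \in P by move=> *; apply: inP.
split.
- by apply/hleft_eq; [lia | split=> // t t_in; rewrite /hedge in_P //; lia].
- apply/esym/hleft_eq; [lia | split=> // t t_in].
  by apply/orP; right; rewrite in_P ?andbT; lia.
- by apply/vbot_eq; [lia | split=> // t t_in; rewrite /vedge in_P //; lia].
- apply/esym/vbot_eq; [lia | split=> // t t_in].
  by apply/orP; right; rewrite in_P ?andbT; lia.
- move=> H /hole_lower_left[_]; rewrite /inF /=.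
  case: (lower_left H) => e1 e2 /= eP.
  have : ~~ ((a1 <= e1 < b1) && (a2 <= e2 < b2)) by apply: contra eP => /andP[]; apply: in_P.
  lia.
Qed.

Lemma phi_exp_frame a b c d : frame a b c d -> forall t, t < ntor P hs ->
  phi_exp P hs a t + phi_exp P hs b t = phi_exp P hs c t + phi_exp P hs d t.
Proof.
case=> Hac Hbd Vad Vbc bal t lt_t; rewrite /phi_exp.
case: ifP => [_ | /negbT]; first by rewrite Hac Hbd.
case: ifP => [_ | /negbT]; first by rewrite Vad Vbc addnC.
move: lt_t; rewrite /ntor -!leqNgt => *; apply/bal/mem_nth.
by change (t - size (HI P) - size (VI P) < size hs); lia.
Qed.

Lemma phi_exp_hleft a x : x \in HI P ->
  phi_exp P hs a (index x (HI P)) = (hleft P a == x).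
Proof. by move=> xH; rewrite /phi_exp index_mem xH nth_index // eq_sym. Qed.

Lemma phi_exp_vbot a x : x \in VI P ->
  phi_exp P hs a (size (HI P) + index x (VI P)) = (vbot P a == x).
Proof.
move=> xV; rewrite /phi_exp ltnNge leq_addr ltn_add2l index_mem xV /=.
by rewrite addKn nth_index // eq_sym.
Qed.

Lemma phi_exp_hole a H : H \in hs ->
  phi_exp P hs a (size (HI P) + size (VI P) + index H hs) = inF H a.
Proof.
move=> Hhs; rewrite /phi_exp ltnNge -addnA leq_addr addnA ltnNge leq_addr /=.
by rewrite -addnA addKn addKn nth_index.
Qed.

Lemma phi_exp_eq_frame a b c d :
  a \in VP P -> b \in VP P -> c \in VP P -> d \in VP P ->
  (forall t, t < ntor P hs ->
     phi_exp P hs a t + phi_exp P hs b t = phi_exp P hs c t + phi_exp P hs d t) ->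
  [\/ a = c /\ b = d, a = d /\ b = c, frame a b c d | frame a b d c].
Proof.
move=> aV bV cV dV eq_exp.
have HI_mem v : v \in VP P -> hleft P v \in HI P by move=> vV; rewrite mem_undup map_f.
have VI_mem v : v \in VP P -> vbot P v \in VI P by move=> vV; rewrite mem_undup map_f.
have pH : perm_eq [:: hleft P a; hleft P b] [:: hleft P c; hleft P d].
  apply/allP => x x_in; have xH : x \in HI P.
    by move: x_in; rewrite !inE => /or4P[] /eqP->; apply: HI_mem.
  rewrite /= !addn0 -!phi_exp_hleft // eq_exp //.
  by move: xH; rewrite -index_mem /ntor => /leq_trans; apply; rewrite -addnA leq_addr.
have pV : perm_eq [:: vbot P a; vbot P b] [:: vbot P c; vbot P d].
  apply/allP => x x_in; have xV : x \in VI P.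
    by move: x_in; rewrite !inE => /or4P[] /eqP->; apply: VI_mem.
  rewrite /= !addn0 -!phi_exp_vbot // eq_exp //.
  move: xV; rewrite -index_mem /ntor -(ltn_add2l (size (HI P))) => /leq_trans.
  by apply; rewrite leq_addr.
have bal H : H \in hs -> inF H a + inF H b = inF H c + inF H d.
  move=> Hhs; rewrite -!(phi_exp_hole _ Hhs) eq_exp //.
  by rewrite /ntor ltn_add2l index_mem.
have vertex_eq u v : hleft P u = hleft P v -> vbot P u = vbot P v -> u = v.
  by case: u v => [u1 u2] [v1 v2] [_ <-] [<-].
case: (perm_eq_pair pH) => [[Hac Hbd] | [Had Hbc]];
  case: (perm_eq_pair pV) => [[Vac Vbd] | [Vad Vbc]].
- by constructor 1; split; apply: vertex_eq.
- by constructor 3.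
- by constructor 4; split=> // H /bal ->; rewrite addnC.
- by constructor 2; split; apply: vertex_eq.
Qed.

End Frame.

Section PolyominoIdeals.
Variables (K : fieldType) (P : seq cell) (hs : seq (seq cell)).
Hypothesis hs_holes : holes_enum P hs.
Local Open Scope ring_scope.

Lemma vtx_mem (i : 'I_(size (VP P))) : vtx P i \in VP P.
Proof. exact: mem_nth. Qed.

Lemma vtx_inj : injective (fun i : 'I_(size (VP P)) => vtx P i).
Proof. by move=> i k /eqP; rewrite nth_uniq ?undup_uniq // => /eqP/val_inj. Qed.

Lemma frame_binomial (i j k l : 'I_(size (VP P))) :
  frame P hs (vtx P i) (vtx P j) (vtx P k) (vtx P l) ->
  polyomino_ideal ('X_i * 'X_j - 'X_k * 'X_l : Sring K P).
Proof.
wlog le1 : i j k l / ((vtx P i).1 <= (vtx P j).1)%N.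
  move=> wlog_le fr; case: (leqP (vtx P i).1 (vtx P j).1) => [le | /ltnW le].
    exact: wlog_le _ _ _ _ le fr.
  have := wlog_le _ _ _ _ le (frameC fr).
  by rewrite (mulrC ('X_j : Sring K P)) (mulrC ('X_l : Sring K P)).
wlog le2 : i j k l le1 / ((vtx P i).2 <= (vtx P j).2)%N.
  move=> wlog_le fr; case: (leqP (vtx P i).2 (vtx P j).2) => [le | /ltnW le].
    exact: wlog_le _ _ _ _ le1 le fr.
  have [ek el] := frame_corners fr.
  have le1' : ((vtx P l).1 <= (vtx P k).1)%N by rewrite ek el.
  have le2' : ((vtx P l).2 <= (vtx P k).2)%N by rewrite ek el.
  move: (wlog_le _ _ _ _ le1' le2' (frameC (frame_sym fr))) => /ideal_genN.
  by rewrite opprB (mulrC ('X_j : Sring K P)) (mulrC ('X_l : Sring K P)).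
move=> fr; have [ek el] := frame_corners fr.
case: (ltngtP (vtx P i).1 (vtx P j).1) le1 => // [lt1 _ | eq1 _]; last first.
  have -> : k = i by apply: vtx_inj; rewrite /= ek -eq1; case: (vtx P i).
  have -> : l = j by apply: vtx_inj; rewrite /= el eq1; case: (vtx P j).
  by rewrite subrr; apply: ideal_gen0.
case: (ltngtP (vtx P i).2 (vtx P j).2) le2 => // [lt2 _ | eq2 _]; last first.
  have -> : k = j by apply: vtx_inj; rewrite /= ek eq2; case: (vtx P j).
  have -> : l = i by apply: vtx_inj; rewrite /= el -eq2; case: (vtx P i).
  by rewrite mulrC subrr; apply: ideal_gen0.
apply: ideal_gen_mem; exists i, j, l, k; split=> //.
  exact: (frame_inner hs_holes fr lt1 lt2).
by rewrite (mulrC ('X_k : Sring K P)).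
Qed.

(* [phi_var i] is ['X_[phi_mnm i]] by definition, so [phi] is the monomial map of [phi_mnm]. *)
Definition phi_mnm (i : 'I_(size (VP P))) : 'X_{1..ntor P hs} :=
  [multinom phi_exp P hs (vtx P i) t | t < ntor P hs].

Lemma phi_mnm_pairE (i j k l : 'I_(size (VP P))) :
  (phi_mnm i + phi_mnm j = phi_mnm k + phi_mnm l)%MM <->
  (forall t, (t < ntor P hs)%N -> (phi_exp P hs (vtx P i) t + phi_exp P hs (vtx P j) t =
                               phi_exp P hs (vtx P k) t + phi_exp P hs (vtx P l) t)%N).
Proof.
split=> [/mnmP eq_mnm t lt_t | eq_exp].
  by have := eq_mnm (Ordinal lt_t); rewrite !mnmDE !mnmE.
by apply/mnmP => t; rewrite !mnmDE !mnmE eq_exp.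
Qed.

Lemma inner_minor_toric (g : Sring K P) : inner_minor g -> toric_deg2 hs g.
Proof.
case=> i [j [k [l [inner ek el ->]]]]; split.
  rewrite /toric_ideal /phi raddfB /= -!mpolyXD !(mmap_monomialX K phi_mnm).
  rewrite !monomial_imageD !monomial_imageU [(phi_mnm k + _)%MM]addmC.
  suff -> : (phi_mnm i + phi_mnm j = phi_mnm l + phi_mnm k)%MM by rewrite subrr.
  apply/phi_mnm_pairE; apply: phi_exp_frame; rewrite ek el.
  exact: (inner_frame hs_holes inner).
by rewrite -!mpolyXD; apply: dhomogD; rewrite ?dhomogN dhomogX /= mdegD !mdeg1.
Qed.

Lemma toric_deg2_polyomino (f : Sring K P) : toric_deg2 hs f -> polyomino_ideal f.
Proof.
case=> phi_f f_homog.
apply: (monomial_map_kernel (e := phi_mnm) (D := fun m => mdeg m = 2%N)) phi_f; last first.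
  by move=> m /(dhomog_mf f_homog).
move=> _ _ /mdeg_eq2[i [j ->]] /mdeg_eq2[k [l ->]].
rewrite !monomial_imageD !monomial_imageU !mpolyXD => /phi_mnm_pairE.
case/(phi_exp_eq_frame (vtx_mem i) (vtx_mem j) (vtx_mem k) (vtx_mem l)).
- by case=> /vtx_inj-> /vtx_inj->; rewrite subrr; apply: ideal_gen0.
- by case=> /vtx_inj-> /vtx_inj->; rewrite mulrC subrr; apply: ideal_gen0.
- exact: frame_binomial.
- by move/frame_binomial; rewrite (mulrC ('X_l : Sring K P)).
Qed.

End PolyominoIdeals.

Theorem lemma3p1 (K : fieldType) (P : seq cell) (hs : seq (seq cell)) :
  is_polyomino P -> holes_enum P hs ->
  forall f : Sring K P,
    polyomino_ideal f <-> ideal_gen (@toric_deg2 K P hs) f.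
Proof.
move=> _ hs_holes f; split; apply: ideal_gen_sub => g.
  by move/(inner_minor_toric hs_holes); apply: ideal_gen_mem.
exact: toric_deg2_polyomino.
Qed.
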